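(* With notation as below, fix $k\in[N]$ and let $\tau^{(b_k\leftrightarrow c_k)}$ and $\tau^{\mathrm{adj}}$ be as defined below. Then for all $\mathbf s\in\mathbb Z^n$ and all distinct $i,j\in\{1,\dots,n\}$ (whenever the denominators are nonzero), $$(\alpha_i-\alpha_j)\frac{\tau^{(b_k\leftrightarrow c_k)}(\mathbf s)\,\tau^{(b_k\leftrightarrow c_k)}(\mathbf s+e_i+e_j)}{\tau^{(b_k\leftrightarrow c_k)}(\mathbf s+e_i)\,\tau^{(b_k\leftrightarrow c_k)}(\mathbf s+e_j)}=(\alpha_i-\alpha_j)\frac{\tau^{\mathrm{adj}}(\mathbf s)\,\tau^{\mathrm{adj}}(\mathbf s+e_i+e_j)}{\tau^{\mathrm{adj}}(\mathbf s+e_i)\,\tau^{\mathrm{adj}}(\mathbf s+e_j)};$$ that is, the $N$-soliton solution (vertex parameters) obtained by swapping $b_k$ and $c_k$ coincides with the one obtained by keeping $b_k,c_k$ and replacing $A_j\mapsto A_j/Z_{k,j}$ ($j\neq k$), $A_k\mapsto 1/A_k$.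
   Context: Let $\alpha_1,\dots,\alpha_n\in\mathbb R$, $f(t)=\prod_{j}(t-\alpha_j)$, $N\ge1$, and for $i\in[N]=\{1,\dots,N\}$ let $A_i\neq0$, $b_i,c_i\in\mathbb R\setminus\{\alpha_1,\dots,\alpha_n\}$ with $f(b_i)=f(c_i)$, with $b_i\neq c_j$, $b_i\ne b_j$, $c_i\neq c_j$ for $i\neq j$. $e_1,\dots,e_n$ is the standard basis of $\mathbb Z^n$. Put $B_{i,j}=\frac{b_i-\alpha_j}{c_i-\alpha_j}$, $Z_{i,j}=\frac{(b_i-b_j)(c_i-c_j)}{(b_i-c_j)(c_i-b_j)}$, $f_i(\mathbf s)=A_i\prod_jB_{i,j}^{\mathbf s_j}$, $\tau(\mathbf s)=\sum_{T\subseteq[N]}\prod_{\{i<j\}\subseteq T}Z_{i,j}\prod_{i\in T}f_i(\mathbf s)$. $\tau^{(b_k\leftrightarrow c_k)}$ is $\tau$ computed after interchanging the values of $b_k$ and $c_k$; $\tau^{\mathrm{adj}}$ is $\tau$ computed with $A_j$ replaced by $A_j/Z_{k,j}$ for $j\ne k$ and $A_k$ replaced by $1/A_k$. *)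

From mathcomp Require Import all_boot all_order all_algebra.
Set Implicit Arguments. Unset Strict Implicit. Unset Printing Implicit Defensive.
Import Order.TTheory GRing.Theory Num.Theory.
Local Open Scope ring_scope.

Definition fpoly (R : realFieldType) (n : nat) (alpha : 'I_n -> R) (t : R) : R :=
  \prod_(j < n) (t - alpha j).

Definition Bc (R : realFieldType) (n N : nat) (alpha : 'I_n -> R) (b c : 'I_N -> R)
  (i : 'I_N) (j : 'I_n) : R := (b i - alpha j) / (c i - alpha j).

Definition Zc (R : realFieldType) (N : nat) (b c : 'I_N -> R) (i j : 'I_N) : R :=
  ((b i - b j) * (c i - c j)) / ((b i - c j) * (c i - b j)).

Definition fsol (R : realFieldType) (n N : nat) (alpha : 'I_n -> R)
  (A b c : 'I_N -> R) (s : 'I_n -> int) (i : 'I_N) : R :=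
  A i * \prod_(j < n) (Bc alpha b c i j) ^ (s j).

Definition tau (R : realFieldType) (n N : nat) (alpha : 'I_n -> R)
  (A b c : 'I_N -> R) (s : 'I_n -> int) : R :=
  \sum_(T : {set 'I_N})
    (\prod_(i in T) \prod_(j in T | (i < j)%N) Zc b c i j) *
    \prod_(i in T) fsol alpha A b c s i.

Definition shift (n : nat) (s : 'I_n -> int) (i : 'I_n) : 'I_n -> int :=
  fun l => s l + (l == i)%:Z.

Definition swapb (R : realFieldType) (N : nat) (b c : 'I_N -> R) (k : 'I_N) : 'I_N -> R :=
  fun i => if i == k then c k else b i.
Definition swapc (R : realFieldType) (N : nat) (b c : 'I_N -> R) (k : 'I_N) : 'I_N -> R :=
  fun i => if i == k then b k else c i.

Definition adjA (R : realFieldType) (N : nat) (A b c : 'I_N -> R) (k : 'I_N) : 'I_N -> R :=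
  fun j => if j == k then (A k)^-1 else A j / Zc b c k j.

Definition vratio (R : realFieldType) (n : nat) (alpha : 'I_n -> R) (t : ('I_n -> int) -> R)
  (s : 'I_n -> int) (i j : 'I_n) : R :=
  (alpha i - alpha j) * (t s * t (shift (shift s i) j)) / (t (shift s i) * t (shift s j)).

From mathcomp Require Import all_boot all_order all_algebra.
From mathcomp Require Import ring.
Set Implicit Arguments. Unset Strict Implicit. Unset Printing Implicit Defensive.
Import Order.TTheory GRing.Theory Num.Theory.
Local Open Scope ring_scope.

(* Interchanging b_k and c_k inverts every Z_{k,j} and every B_{k,l}.  Pairing each
   subset T with T xor {k}, one finds tau^(b_k<->c_k)(s) = f'_k(s) tau^adj(s), where
   f'_k(s) = A_k prod_l B_{k,l}^{-s_l} is the one-soliton factor with b_k, c_k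
   interchanged.  Such a Laurent monomial in s satisfies g(s) g(s+e_i+e_j) =
   g(s+e_i) g(s+e_j), so it cancels in the vertex ratio. *)

(* By definition [fsol alpha A b c s i] is [laurent_monomial (A i) (Bc alpha b c i) s]. *)
Definition laurent_monomial (R : fieldType) (n : nat) (C : R) (x : 'I_n -> R)
  (s : 'I_n -> int) : R := C * \prod_(l < n) x l ^ s l.

Definition pairprod (R : pzRingType) (N : nat) (Z : 'I_N -> 'I_N -> R) (T : {set 'I_N}) : R :=
  \prod_(i in T) \prod_(j in T | (i < j)%N) Z i j.

Section LaurentMonomial.

Variables (R : fieldType) (n : nat) (C : R) (x : 'I_n -> R).
Hypothesis x_neq0 : forall l, x l != 0.

Lemma laurent_monomial_neq0 s : C != 0 -> laurent_monomial C x s != 0.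
Proof.
by move=> C_neq0; rewrite mulf_neq0 //; apply/prodf_neq0 => l _; rewrite expfz_neq0.
Qed.

Lemma laurent_monomial_shift s i :
  laurent_monomial C x (shift s i) = laurent_monomial C x s * x i.
Proof.
rewrite /laurent_monomial -mulrA (bigD1 i) // [in RHS](bigD1 i) //= /shift eqxx.
rewrite expfzDr // expr1z mulrAC; congr (_ * (_ * _ * _)).
by apply: eq_bigr => l /negPf l_neq_i; rewrite l_neq_i addr0.
Qed.

End LaurentMonomial.

Lemma laurent_monomialM (R : fieldType) n (C D : R) (x y : 'I_n -> R) s :
  laurent_monomial C x s * laurent_monomial D y s =
  laurent_monomial (C * D) (fun l => x l * y l) s.
Proof.
by rewrite /laurent_monomial mulrACA -big_split; congr (_ * _); apply: eq_bigr => l _; rewrite expfzMl.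
Qed.

(* No hypothesis on the denominator is needed: when it vanishes both sides are 0. *)
Lemma vratio_mul_laurent_monomial (R : realFieldType) n (alpha : 'I_n -> R) C x
    (t t' : ('I_n -> int) -> R) s i j :
  C != 0 -> (forall l, x l != 0) ->
  (forall u, t' u = laurent_monomial C x u * t u) ->
  vratio alpha t' s i j = vratio alpha t s i j.
Proof.
move=> C_neq0 x_neq0 t'E; rewrite /vratio !t'E !laurent_monomial_shift //.
have g_neq0 := laurent_monomial_neq0 x_neq0 s C_neq0.
have xi_neq0 := x_neq0 i; have xj_neq0 := x_neq0 j.
set g := laurent_monomial C x s; set a := alpha i - alpha j.
set t0 := t s; set t1 := t (shift s i); set t2 := t (shift s j).
set t12 := t (shift (shift s i) j).
have [t_eq0|t_neq0] := eqVneq (t1 * t2) 0.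
  by rewrite [_ * t1 * _]mulrACA t_eq0 mulr0 !invr0 !mulr0.
move: t_neq0; rewrite mulf_eq0 negb_or => /andP[t1_neq0 t2_neq0].
by field; rewrite t1_neq0 t2_neq0 g_neq0 xi_neq0 xj_neq0.
Qed.

Section PairProduct.

Variables (R : comPzRingType) (N : nat).

Lemma eq_pairprod (Z Z' : 'I_N -> 'I_N -> R) (T : {set 'I_N}) :
  {in T &, forall x y, Z x y = Z' x y} -> pairprod Z T = pairprod Z' T.
Proof.
by move=> ZE; apply: eq_bigr => x xT; apply: eq_bigr => y /andP[yT _]; apply: ZE.
Qed.

Lemma pairprod_setU1 (Z : 'I_N -> 'I_N -> R) (k : 'I_N) (U : {set 'I_N}) :
  (forall x y, Z x y = Z y x) -> k \notin U ->
  pairprod Z (k |: U) = (\prod_(j in U) Z k j) * pairprod Z U.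
Proof.
move=> Zsym kU; rewrite /pairprod big_setU1 //= big_mkcondr big_setU1 //= ltnn mul1r.
under [X in _ * X]eq_bigr => x xU.
  rewrite big_mkcondr big_setU1 //= -big_mkcondr Zsym.
  over.
rewrite big_split /= mulrA -big_mkcondr; congr (_ * _).
rewrite [X in X * _]big_mkcondr -big_split /=; apply: eq_bigr => y yU.
have y_neq_k : y != k := memPn kU y yU.
case: ltngtP => [//|_|eq_ky]; first by rewrite mulr1.
- by rewrite mul1r.
- by rewrite (val_inj eq_ky) eqxx in y_neq_k.
Qed.

End PairProduct.

Lemma Zc_sym (R : realFieldType) N (b c : 'I_N -> R) x y : Zc b c x y = Zc b c y x.
Proof. by rewrite /Zc; congr (_ / _); ring. Qed.

Lemma Zc_neq0 (R : realFieldType) N (b c : 'I_N -> R) x y :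
  b x != b y -> c x != c y -> b x != c y -> c x != b y -> Zc b c x y != 0.
Proof. by move=> *; rewrite /Zc mulf_neq0 ?invr_eq0 ?mulf_neq0 ?subr_eq0. Qed.

Section SwapVersusAdjust.

Variables (R : realFieldType) (n N : nat) (alpha : 'I_n -> R) (A b c : 'I_N -> R) (k : 'I_N).
Hypothesis Ak_neq0 : A k != 0.
Hypothesis bk_neq_alpha : forall l, b k != alpha l.
Hypothesis ck_neq_alpha : forall l, c k != alpha l.
Hypothesis hbc : forall i j, i != j -> b i != c j.
Hypothesis hbb : forall i j, i != j -> b i != b j.
Hypothesis hcc : forall i j, i != j -> c i != c j.

Local Notation bs := (swapb b c k).
Local Notation cs := (swapc b c k).
Local Notation Aa := (adjA A b c k).

Definition tau_term (A' b' c' : 'I_N -> R) (t : 'I_n -> int) (T : {set 'I_N}) : R :=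
  pairprod (Zc b' c') T * \prod_(i in T) fsol alpha A' b' c' t i.

Lemma tauE A' b' c' t : tau alpha A' b' c' t = \sum_(T : {set 'I_N}) tau_term A' b' c' t T.
Proof. by []. Qed.

Lemma Zc_swap_off x y : x != k -> y != k -> Zc bs cs x y = Zc b c x y.
Proof. by move=> /negPf xk /negPf yk; rewrite /Zc /swapb /swapc xk yk. Qed.

Lemma Zc_swap_k y : y != k -> Zc bs cs k y = (Zc b c k y)^-1.
Proof.
by move=> /negPf yk; rewrite /Zc /swapb /swapc yk eqxx invf_div; congr (_ / _); ring.
Qed.

Lemma Zc_k_neq0 y : y != k -> Zc b c k y != 0.
Proof.
move=> yk; have ky : k != y by rewrite eq_sym.
by rewrite Zc_neq0 ?hbb ?hcc ?hbc // eq_sym hbc.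
Qed.

Lemma Bc_swap_k_neq0 l : Bc alpha bs cs k l != 0.
Proof. by rewrite /Bc /swapb /swapc eqxx mulf_neq0 ?invr_eq0 ?subr_eq0. Qed.

Lemma fsol_swap_off t x : x != k -> fsol alpha A bs cs t x = fsol alpha A b c t x.
Proof.
by move=> /negPf xk; congr (_ * _); apply: eq_bigr => l _; rewrite /Bc /swapb /swapc xk.
Qed.

Lemma fsol_adj_off t x : x != k -> fsol alpha Aa b c t x = fsol alpha A b c t x / Zc b c k x.
Proof. by move=> /negPf xk; rewrite /fsol /adjA xk mulrAC. Qed.

Lemma fsol_swap_adj_k t : fsol alpha A bs cs t k * fsol alpha Aa b c t k = 1.
Proof.
rewrite [LHS]laurent_monomialM /adjA eqxx mulfV // /laurent_monomial mul1r.
apply: big1 => l _; rewrite /Bc /swapb /swapc eqxx -invf_div mulVf ?exp1rz //.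
by rewrite mulf_neq0 ?invr_eq0 ?subr_eq0.
Qed.

Section OffK.

Variables (t : 'I_n -> int) (U : {set 'I_N}).
Hypothesis kU : k \notin U.

Let Zk := \prod_(x in U) Zc b c k x.

Lemma Zk_neq0 : Zk != 0.
Proof. by apply/prodf_neq0 => x xU; apply: Zc_k_neq0 (memPn kU x xU). Qed.

Lemma pairprod_swap_off : pairprod (Zc bs cs) U = pairprod (Zc b c) U.
Proof. by apply: eq_pairprod => x y xU yU; rewrite Zc_swap_off ?(memPn kU). Qed.

Lemma prod_fsol_swap_off :
  \prod_(x in U) fsol alpha A bs cs t x = \prod_(x in U) fsol alpha A b c t x.
Proof. by apply: eq_bigr => x xU; rewrite fsol_swap_off ?(memPn kU). Qed.

Lemma prod_fsol_adj_off :
  \prod_(x in U) fsol alpha Aa b c t x = (\prod_(x in U) fsol alpha A b c t x) / Zk.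
Proof.
by rewrite /Zk -prodfV -big_split; apply: eq_bigr => x xU; rewrite fsol_adj_off ?(memPn kU).
Qed.

Lemma prod_Zc_swap_k : \prod_(x in U) Zc bs cs k x = Zk^-1.
Proof. by rewrite /Zk -prodfV; apply: eq_bigr => x xU; rewrite Zc_swap_k ?(memPn kU). Qed.

Lemma tau_term_swap_off :
  tau_term A bs cs t U = fsol alpha A bs cs t k * tau_term Aa b c t (k |: U).
Proof.
rewrite /tau_term pairprod_setU1 //; last exact: Zc_sym.
rewrite big_setU1 //= pairprod_swap_off prod_fsol_swap_off prod_fsol_adj_off.
have := fsol_swap_adj_k t; have := Zk_neq0; rewrite -/Zk.
set fs := fsol _ _ _ _ _ k; set fa := fsol _ _ _ _ _ k => Zk_neq0 fs_fa.
by rewrite -[LHS]mulr1 -fs_fa; field.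
Qed.

Lemma tau_term_swap_k :
  tau_term A bs cs t (k |: U) = fsol alpha A bs cs t k * tau_term Aa b c t U.
Proof.
rewrite /tau_term pairprod_setU1 //; last exact: Zc_sym.
rewrite big_setU1 //= prod_Zc_swap_k pairprod_swap_off prod_fsol_swap_off prod_fsol_adj_off.
by rewrite /Zk; ring.
Qed.

End OffK.

Definition toggle (T : {set 'I_N}) := if k \in T then T :\ k else k |: T.

Lemma toggleK : involutive toggle.
Proof.
move=> T; rewrite /toggle; have [kT|kT] := boolP (k \in T).
- by rewrite setD11 setD1K.
- by rewrite setU11 setU1K.
Qed.

Lemma tau_swap_adj t : tau alpha A bs cs t = fsol alpha A bs cs t k * tau alpha Aa b c t.
Proof.
rewrite !tauE [in RHS](reindex_inj (inv_inj toggleK)) mulr_sumr.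
apply: eq_bigr => T _; rewrite /toggle; have [kT|kT] := boolP (k \in T).
- by rewrite -{1}(setD1K kT) tau_term_swap_k // setD11.
- exact: tau_term_swap_off.
Qed.

End SwapVersusAdjust.

Theorem corollary8p9 (R : realFieldType) (n N : nat) (alpha : 'I_n -> R)
  (A b c : 'I_N -> R)
  (hA : forall i, A i != 0)
  (hb : forall i l, b i != alpha l)
  (hc : forall i l, c i != alpha l)
  (hf : forall i, fpoly alpha (b i) = fpoly alpha (c i))
  (hbc : forall i j, i != j -> b i != c j)
  (hbb : forall i j, i != j -> b i != b j)
  (hcc : forall i j, i != j -> c i != c j)
  (k : 'I_N) (s : 'I_n -> int) (i j : 'I_n) (hij : i != j)
  (hden1 : tau alpha A (swapb b c k) (swapc b c k) (shift s i) *
           tau alpha A (swapb b c k) (swapc b c k) (shift s j) != 0)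
  (hden2 : tau alpha (adjA A b c k) b c (shift s i) *
           tau alpha (adjA A b c k) b c (shift s j) != 0) :
  vratio alpha (tau alpha A (swapb b c k) (swapc b c k)) s i j =
  vratio alpha (tau alpha (adjA A b c k) b c) s i j.
Proof.
apply: (vratio_mul_laurent_monomial alpha s i j (hA k) (Bc_swap_k_neq0 (hb k) (hc k))).
exact: (tau_swap_adj (hA k) (hb k) (hc k) hbc hbb hcc).
Qed.
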